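(* If a connected DGA has a nontrivial $a$-Massey product, then it is not formal.
   Context: A DGA is a graded-commutative differential graded algebra over $\mathbb R$, connected if $H^0=\mathbb R$; $|x|$ denotes degree and $\overline{x}=(-1)^{|x|}x$. Given closed $a,b_1,\dots,b_n$ with $|a|$ even and each $a\wedge b_i$ exact, the $a$-Massey product is $\langle a;b_1,\dots,b_n\rangle=\{[\sum_{i=1}^n\overline{\xi_1}\wedge\cdots\wedge\overline{\xi_{i-1}}\wedge b_i\wedge\xi_{i+1}\wedge\cdots\wedge\xi_n] : d\xi_i=a\wedge b_i\}\subset H$; it is nontrivial if it does not contain $0$. A DGA is minimal if it is free as a graded-commutative algebra on generators $\{a_\tau\}$ indexed by a well-ordered set with $|a_\mu|\le|a_\tau|$ for $\mu<\tau$ and each $da_\tau$ expressed in terms of preceding generators; a minimal model of $\mathcal A$ is a minimal DGA $\mathcal M$ with a morphism $\mathcal M\to\mathcal A$ inducing an isomorphism in cohomology; $\mathcal A$ is formal if there is a DGA morphism $\mathcal M\to H(\mathcal A)$ (with zero differential) inducing an isomorphism in cohomology. *)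

From HB Require Import structures.
From mathcomp Require Import all_boot all_order all_algebra.
From mathcomp Require Import reals.
Set Implicit Arguments. Unset Strict Implicit. Unset Printing Implicit Defensive.
Import GRing.Theory.
Local Open Scope ring_scope.

Section DGADefs.
Variable R : realType.

(* A graded-commutative (N-)graded algebra over R: an associative unital
   R-algebra A together with subspaces A^k (gca_hom k) such that
   A = (+)_k A^k (direct sum), A^i A^j <= A^(i+j), 1 in A^0, and
   x y = (-1)^(ij) y x for x in A^i, y in A^j. *)
Record GCA := {
  gca_car :> algType R;
  gca_hom : nat -> gca_car -> Prop;
  gca_hom0 : forall k, gca_hom k 0;
  gca_homD : forall k x y, gca_hom k x -> gca_hom k y -> gca_hom k (x + y);
  gca_homZ : forall k (c : R) x, gca_hom k x -> gca_hom k (c *: x);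
  gca_hom1 : gca_hom 0 1;
  gca_homM : forall i j x y, gca_hom i x -> gca_hom j y -> gca_hom (i + j) (x * y);
  gca_decomp : forall x, exists (n : nat) (s : nat -> gca_car),
      (forall k, gca_hom k (s k)) /\ x = \sum_(0 <= k < n) s k;
  gca_direct : forall (n : nat) (s : nat -> gca_car), (forall k, gca_hom k (s k)) ->
      \sum_(0 <= k < n) s k = 0 -> forall k, (k < n)%N -> s k = 0;
  gca_comm : forall i j x y, gca_hom i x -> gca_hom j y ->
      x * y = (-1) ^+ (i * j) *: (y * x)
}.

Record DGA := {
  dga_gca :> GCA;
  dga_d : dga_gca -> dga_gca;
  dga_dD : forall x y, dga_d (x + y) = dga_d x + dga_d y;
  dga_dZ : forall (c : R) x, dga_d (c *: x) = c *: dga_d x;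
  dga_d_hom : forall k x, gca_hom k x -> gca_hom k.+1 (dga_d x);
  dga_dd : forall x, dga_d (dga_d x) = 0;
  dga_leibniz : forall i x y, gca_hom i x ->
      dga_d (x * y) = dga_d x * y + (-1) ^+ i *: (x * dga_d y)
}.

Definition exact (A : DGA) (x : A) : Prop := exists y : A, dga_d y = x.

(* H^0(A) = R, i.e. the closed degree-0 elements are the multiples of 1
   (there are no nonzero exact elements of degree 0). *)
Definition connected (A : DGA) : Prop :=
  forall x : A, gca_hom 0 x -> dga_d x = 0 -> exists c : R, x = c *: 1.

Definition gca_morph (A B : GCA) (f : A -> B) : Prop :=
  [/\ (forall x y, f (x + y) = f x + f y),
      (forall (c : R) x, f (c *: x) = c *: f x),
      f 1 = 1,
      (forall x y, f (x * y) = f x * f y) &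
      (forall k x, gca_hom k x -> gca_hom k (f x))].

Definition dga_morph (A B : DGA) (f : A -> B) : Prop :=
  gca_morph f /\ (forall x, f (dga_d x) = dga_d (f x)).

(* f induces an isomorphism H^k(A) -> H^k(B) for every k *)
Definition quasi_iso (A B : DGA) (f : A -> B) : Prop :=
  forall k : nat,
    (forall x : A, gca_hom k x -> dga_d x = 0 -> exact (f x) -> exact x) /\
    (forall y : B, gca_hom k y -> dga_d y = 0 ->
       exists x : A, [/\ gca_hom k x, dga_d x = 0 & exact (f x - y)]).

Definition subalg_gen (A : GCA) (S : A -> Prop) (x : A) : Prop :=
  forall P : A -> Prop, P 1 -> (forall y, S y -> P y) ->
    (forall y z, P y -> P z -> P (y + z)) ->
    (forall (c : R) y, P y -> P (c *: y)) ->
    (forall y z, P y -> P z -> P (y * z)) -> P x.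

(* Minimal DGA: free as a graded-commutative algebra (universal property)
   on homogeneous generators g indexed by a well-ordered set (I, lt), with
   nondecreasing degrees and d(g t) in the subalgebra generated by the
   preceding generators. *)
Definition is_minimal (M : DGA) : Prop :=
  exists (I : Type) (lt : I -> I -> Prop) (g : I -> M) (dg : I -> nat),
    [/\ well_founded lt /\ (forall i, ~ lt i i) /\
        (forall i j k, lt i j -> lt j k -> lt i k) /\
        (forall i j, lt i j \/ i = j \/ lt j i),
      (forall t, gca_hom (dg t) (g t)),
      (forall m t, lt m t -> (dg m <= dg t)%N),
      (forall t, subalg_gen (fun y => exists m, lt m t /\ y = g m) (dga_d (g t))) &
      (forall (B : GCA) (h : I -> B), (forall t, gca_hom (dg t) (h t)) ->
         exists phi : M -> B,
           [/\ gca_morph phi, (forall t, phi (g t) = h t) &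
               forall psi : M -> B, gca_morph psi -> (forall t, psi (g t) = h t) ->
                 forall x, psi x = phi x])].

(* C (a DGA with zero differential) is a copy of the cohomology algebra
   H(A): theta sends C^k to closed elements of A^k and induces a graded
   algebra isomorphism C -> H(A). *)
Definition cohomology_model (C A : DGA) (theta : C -> A) : Prop :=
  [/\ (forall x : C, dga_d x = 0),
      (forall x y, theta (x + y) = theta x + theta y) /\
      (forall (c : R) x, theta (c *: x) = c *: theta x),
      theta 1 = 1 /\ (forall x y, exact (theta (x * y) - theta x * theta y)),
      (forall k x, gca_hom k x -> gca_hom k (theta x) /\ dga_d (theta x) = 0) &
      (forall k x, gca_hom k x -> exact (theta x) -> x = 0) /\
      (forall k y, gca_hom k y -> dga_d y = 0 ->
         exists x, gca_hom k x /\ exact (theta x - y))].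

(* A is formal: it has a minimal model f : M -> A and a DGA morphism
   g : M -> H(A) inducing an isomorphism in cohomology. *)
Definition formal (A : DGA) : Prop :=
  exists (M C : DGA) (f : M -> A) (g : M -> C) (theta : C -> A),
    [/\ is_minimal M, dga_morph f /\ quasi_iso f,
        cohomology_model theta & dga_morph g /\ quasi_iso g].

(* representative sum_i bar(xi_0)...bar(xi_(i-1)) b_i xi_(i+1) ... xi_(n-1),
   indices shifted to 0..n-1; xi_j has degree p + q j - 1. *)
Definition massey_elt (A : GCA) (n p : nat) (q : nat -> nat) (b xi : nat -> A) : A :=
  \sum_(0 <= i < n)
    ((\prod_(0 <= j < i) ((-1) ^+ (p + q j - 1) *: xi j)) * b i
       * \prod_(i.+1 <= j < n) xi j).

(* the a-Massey product <a; b_0, ..., b_(n-1)> (a of even degree p, b_i of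
   degree q i) is defined and does not contain 0 *)
Definition massey_nontrivial (A : DGA) (n p : nat) (a : A) (q : nat -> nat)
    (b : nat -> A) : Prop :=
  [/\ gca_hom p a, ~~ odd p, dga_d a = 0,
      (forall i, (i < n)%N ->
         [/\ gca_hom (q i) (b i), dga_d (b i) = 0 & exact (a * b i)]) &
      forall xi : nat -> A,
        (forall i, (i < n)%N -> gca_hom (p + q i - 1) (xi i) /\ dga_d (xi i) = a * b i) ->
        ~ exact (massey_elt n p q b xi)].

End DGADefs.

From HB Require Import structures.
From mathcomp Require Import all_boot all_order all_algebra.
From mathcomp Require Import reals.
From Stdlib Require Import ClassicalEpsilon.
Set Implicit Arguments. Unset Strict Implicit. Unset Printing Implicit Defensive.
Import GRing.Theory.
Local Open Scope ring_scope.

(* Let f : M -> A and g : M -> H(A) be quasi-isomorphisms.  Lift a, b_i to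
   cocycles aM, bM_i of M.  Each aM bM_i is exact, and since H(A) has zero
   differential its primitives xi_i can be chosen in ker g.  For n >= 2 every
   term of the resulting Massey representative in M contains some xi_i, so
   the representative is a cocycle killed by g, hence exact.  Its image under
   f is an exact representative for the cohomologous data f aM, f bM_i, and
   moving a defining system along cohomologous data changes the
   representative by an exact element, so <a; b_1, ..., b_n> contains 0. *)

Lemma choice_ltn (T : Type) (x0 : T) n (P : nat -> T -> Prop) :
  (forall i, (i < n)%N -> exists x, P i x) ->
  exists f : nat -> T, forall i, (i < n)%N -> P i (f i).
Proof.
move=> h; apply: (choice (fun i x => (i < n)%N -> P i x)) => i.
case: (ltnP i n) => [/h [x Px] | ni]; first by exists x.
by exists x0.
Qed.

Lemma sum_nat_delta (V : nmodType) N m (x : V) : (m < N)%N ->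
  \sum_(0 <= k < N) (if k == m then x else 0) = x.
Proof. by move=> mN; rewrite -big_mkcond /= big_nat1_eq /= mN. Qed.

Lemma nat_down_ind (P : nat -> Prop) n :
  P n -> (forall k, (k < n)%N -> P k.+1 -> P k) -> forall k, (k <= n)%N -> P k.
Proof.
move=> Pn IH.
suff H d k : (k + d)%N = n -> P k.
  by move=> k kn; apply: (H (n - k)%N); rewrite addnC subnK.
elim: d k => [|d IHd] k; first by rewrite addn0 => ->.
move=> e; apply: IH; first by rewrite -e addnS ltnS leq_addr.
by apply: IHd; rewrite addSnnS.
Qed.

Section Signs.
Variable R : realType.

Lemma sign_even p : ~~ odd p -> (-1) ^+ p = 1 :> R.
Proof. by move=> hp; rewrite -signr_odd (negbTE hp) expr0. Qed.

Lemma sign_mul_odd e m : odd m -> (-1) ^+ (e * m) = (-1) ^+ e :> R.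
Proof. by move=> hm; rewrite -signr_odd oddM hm andbT signr_odd. Qed.

Lemma sign_even_add_pred p q : ~~ odd p -> (0 < p + q)%N ->
  (-1) ^+ (p + q - 1) = - (-1) ^+ q :> R.
Proof.
move=> hp; case E: (p + q)%N => [|m] // _.
rewrite subn1 /= -signr_odd -[in RHS]signr_odd.
have -> : odd q = ~~ odd m by rewrite -[~~ odd m]/(odd m.+1) -E oddD (negbTE hp).
by case: (odd m); rewrite ?expr0 ?expr1 ?opprK.
Qed.

Lemma sign_even_add_pred_r p q : ~~ odd p -> (0 < q)%N ->
  (-1) ^+ (p + q - 1) = (-1) ^+ q.-1 :> R.
Proof.
by move=> hp q0; rewrite -addnBA ?subn1 // -signr_odd oddD (negbTE hp) signr_odd.
Qed.

End Signs.

Section GradedAlgebra.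
Variables (R : realType) (A : GCA R).
Implicit Types (x y : A) (s t : nat -> A).

Lemma gca_homN k x : gca_hom k x -> gca_hom k (- x).
Proof. by move=> h; rewrite -scaleN1r; apply: gca_homZ. Qed.

Lemma gca_homB k x y : gca_hom k x -> gca_hom k y -> gca_hom k (x - y).
Proof. by move=> hx hy; apply: gca_homD => //; apply: gca_homN. Qed.

Lemma gca_hom_delta m x : gca_hom m x -> forall k, gca_hom k (if k == m then x else 0).
Proof. by move=> hx k; case: eqP => [->|_] //; apply: gca_hom0. Qed.

Lemma gca_hom_sum_eq N s t :
  (forall k, gca_hom k (s k)) -> (forall k, gca_hom k (t k)) ->
  \sum_(0 <= k < N) s k = \sum_(0 <= k < N) t k -> forall k, (k < N)%N -> s k = t k.
Proof.
move=> hs ht e k kN; apply/eqP; rewrite -subr_eq0; apply/eqP.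
apply: (@gca_direct _ _ N (fun k => s k - t k)) => //.
  by move=> j; apply: gca_homB.
by rewrite sumrB e subrr.
Qed.

Lemma gca_hom_uniq i j x : gca_hom i x -> gca_hom j x -> i <> j -> x = 0.
Proof.
move=> hi hj ij.
have := gca_hom_sum_eq (N := (maxn i j).+1) (gca_hom_delta hi) (gca_hom_delta hj).
rewrite !sum_nat_delta ?ltnS ?leq_maxl ?leq_maxr // => /(_ erefl i).
rewrite eqxx ltnS leq_maxl => /(_ isT) ->.
by case: eqP => // /esym.
Qed.

Lemma gca_decomp_ge x : exists N0 s, (forall k, gca_hom k (s k)) /\
  forall N, (N0 <= N)%N -> x = \sum_(0 <= k < N) s k.
Proof.
have [N0 [s [hs ->]]] := gca_decomp x.
exists N0, (fun k => if (k < N0)%N then s k else 0); split.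
  by move=> k; case: ifP => _; [apply: hs | apply: gca_hom0].
move=> N NN0; rewrite (@big_cat_nat _ _ _ N0 0 N) /= ?leq0n //.
rewrite [X in _ + X]big1_seq ?addr0; last first.
  by move=> i /andP[_]; rewrite mem_index_iota leqNgt => /andP[/negbTE ->].
by apply: eq_big_nat => i /andP[_ ->].
Qed.

Lemma gca_comm_even p j x y : gca_hom p x -> ~~ odd p -> gca_hom j y -> x * y = y * x.
Proof.
move=> hx hp hy; rewrite (gca_comm hx hy) -signr_odd oddM (negbTE hp).
by rewrite expr0 scale1r.
Qed.

Lemma gca_sqr_odd m x : gca_hom m x -> odd m -> x * x = 0.
Proof.
move=> hx hm; have := gca_comm hx hx; rewrite sign_mul_odd // -signr_odd hm scaleN1r.
move=> /(congr1 (fun z => z + x * x)); rewrite addNr -mulr2n -scaler_nat => /eqP.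
by rewrite scaler_eq0 Num.Theory.pnatr_eq0 => /eqP.
Qed.

(* [y] is homogeneous of degree [m - 1], degree -1 meaning [y = 0]; this
   replaces the truncated degree [m.-1], which is wrong at [m = 0]. *)
Definition gca_hom_pred m y : Prop := if m is m'.+1 then gca_hom m' y else y = 0.

Lemma gca_hom_pred_hom m y : gca_hom_pred m y -> gca_hom m.-1 y.
Proof. by case: m => [->|m] //; apply: gca_hom0. Qed.

Lemma gca_hom_predMl i j x y :
  gca_hom_pred i x -> gca_hom j y -> gca_hom (i + j - 1) (x * y).
Proof.
case: i => [-> _|i hx hy]; first by rewrite mul0r; apply: gca_hom0.
by rewrite addSn subn1; apply: gca_homM.
Qed.

Lemma gca_hom_predMr i j x y :
  gca_hom i x -> gca_hom_pred j y -> gca_hom (i + j - 1) (x * y).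
Proof.
case: j => [_ ->|j hx hy]; first by rewrite mulr0; apply: gca_hom0.
by rewrite addnS subn1; apply: gca_homM.
Qed.

End GradedAlgebra.

Section DifferentialGradedAlgebra.
Variables (R : realType) (A : DGA R).
Implicit Types (x y u v : A) (s t : nat -> A).

Lemma dga_d0 : dga_d (0 : A) = 0.
Proof. by have := @dga_dZ _ A 0 0; rewrite !scale0r. Qed.

Lemma dga_dN x : dga_d (- x) = - dga_d x.
Proof. by rewrite -scaleN1r dga_dZ scaleN1r. Qed.

Lemma dga_dB x y : dga_d (x - y) = dga_d x - dga_d y.
Proof. by rewrite dga_dD dga_dN. Qed.

Lemma dga_d_sum m n (F : nat -> A) :
  dga_d (\sum_(m <= k < n) F k) = \sum_(m <= k < n) dga_d (F k).
Proof. exact: (big_morph _ (@dga_dD _ A) dga_d0). Qed.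

Lemma dga_d1 : dga_d (1 : A) = 0.
Proof.
have := dga_leibniz (1 : A) (gca_hom1 A).
rewrite !mul1r mulr1 expr0 scale1r => h.
by apply: (@addrI _ (dga_d (1 : A))); rewrite addr0 -h.
Qed.

Lemma dga_d_hom_pred m y : gca_hom_pred m y -> gca_hom m (dga_d y).
Proof. by case: m => [->|m /dga_d_hom //]; rewrite dga_d0; apply: gca_hom0. Qed.

Lemma dga_closedM i x y :
  gca_hom i x -> dga_d x = 0 -> dga_d y = 0 -> dga_d (x * y) = 0.
Proof. by move=> hx dx dy; rewrite (dga_leibniz _ hx) dx dy mul0r mulr0 scaler0 addr0. Qed.

Lemma exact0 : exact (0 : A).
Proof. by exists 0; rewrite dga_d0. Qed.

Lemma exactD x y : exact x -> exact y -> exact (x + y).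
Proof. by move=> [u <-] [v <-]; exists (u + v); rewrite dga_dD. Qed.

Lemma exactB x y : exact x -> exact y -> exact (x - y).
Proof. by move=> [u <-] [v <-]; exists (u - v); rewrite dga_dB. Qed.

Lemma exact_sum N (F : nat -> A) :
  (forall k, (k < N)%N -> exact (F k)) -> exact (\sum_(0 <= k < N) F k).
Proof.
elim: N => [|N IH] h; first by rewrite big_geq //; apply: exact0.
rewrite big_nat_recr //=; apply: exactD; last exact: h.
by apply: IH => k kN; apply: h; apply: ltnW.
Qed.

Lemma exact_dM_closed i u y : gca_hom i u -> dga_d y = 0 -> exact (dga_d u * y).
Proof. by move=> hu dy; exists (u * y); rewrite (dga_leibniz _ hu) dy mulr0 scaler0 addr0. Qed.

Lemma exact_closedM_d i x y : gca_hom i x -> dga_d x = 0 -> exact (x * dga_d y).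
Proof.
move=> hx dx; exists ((-1) ^+ i *: (x * y)).
by rewrite dga_dZ (dga_leibniz _ hx) dx mul0r add0r scalerA -expr2 sqrr_sign scale1r.
Qed.

Lemma exact_mul_cohomologous i j x y u v :
  gca_hom i x -> dga_d x = 0 -> dga_d y = 0 -> gca_hom j u ->
  exact (x * y) -> exact ((x + dga_d u) * (y + dga_d v)).
Proof.
move=> hx dx dy hu exy; rewrite mulrDl mulrDr -addrA.
apply: exactD => //; apply: exactD; first exact: exact_closedM_d hx dx.
by apply: exact_dM_closed hu _; rewrite dga_dD dy dga_dd addr0.
Qed.

Lemma dga_d_sum_hom N s t :
  (forall k, gca_hom k (s k)) -> (forall k, gca_hom k (t k)) ->
  dga_d (\sum_(0 <= k < N) s k) = \sum_(0 <= k < N.+1) t k ->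
  t 0%N = 0 /\ forall k, (k < N)%N -> t k.+1 = dga_d (s k).
Proof.
move=> hs ht e.
pose u k := if k is k'.+1 then dga_d (s k') else 0.
have hu k : gca_hom k (u k) by case: k => [|k] /=; [apply: gca_hom0 | apply: dga_d_hom].
have eu : \sum_(0 <= k < N.+1) u k = \sum_(0 <= k < N.+1) t k.
  by rewrite big_nat_recl //= add0r -dga_d_sum e.
have H := gca_hom_sum_eq hu ht eu.
by split => [|k kN]; rewrite -H.
Qed.

Lemma exact_hom_pred m x :
  gca_hom m x -> exact x -> exists y, gca_hom_pred m y /\ dga_d y = x.
Proof.
move=> hx [y dy]; have [N0 [s [hs ey]]] := gca_decomp_ge y.
have e : dga_d (\sum_(0 <= k < maxn N0 m) s k) =
         \sum_(0 <= k < (maxn N0 m).+1) (if k == m then x else 0).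
  by rewrite -ey ?leq_maxl // dy sum_nat_delta // ltnS leq_maxr.
have [t0 tS] := dga_d_sum_hom hs (gca_hom_delta hx) e.
case: m hx {dy e} t0 tS => [|m] hx t0 tS; first by exists 0; rewrite dga_d0 -t0.
exists (s m); split; first exact: hs.
by rewrite -tS ?eqxx // leq_maxr.
Qed.

End DifferentialGradedAlgebra.

Section Morphisms.
Variables (R : realType) (B C : GCA R) (f : B -> C).
Hypothesis fm : gca_morph f.

Lemma gca_morph0 : f 0 = 0.
Proof.
case: fm => fD _ _ _ _; have := fD 0 0; rewrite addr0 => h.
by apply: (@addrI _ (f 0)); rewrite addr0 -h.
Qed.

Lemma gca_morphN x : f (- x) = - f x.
Proof. by case: fm => _ fZ _ _ _; rewrite -scaleN1r fZ scaleN1r. Qed.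

Lemma gca_morphB x y : f (x - y) = f x - f y.
Proof. by case: fm => fD _ _ _ _; rewrite fD gca_morphN. Qed.

Lemma gca_morph_sum m n (F : nat -> B) :
  f (\sum_(m <= k < n) F k) = \sum_(m <= k < n) f (F k).
Proof. by apply: (big_morph _ _ gca_morph0); case: fm. Qed.

Lemma gca_morph_hom k x : gca_hom k x -> gca_hom k (f x).
Proof. by case: fm => _ _ _ _; apply. Qed.

End Morphisms.

Lemma quasi_iso_ker_exact (R : realType) (B C : DGA R) (f : B -> C) :
  gca_morph f -> quasi_iso f -> forall x, dga_d x = 0 -> f x = 0 -> exact x.
Proof.
move=> fm qi x dx fx; have [N [s [hs ex]]] := gca_decomp_ge x.
have e : dga_d (\sum_(0 <= k < N) s k) = \sum_(0 <= k < N.+1) (0 : B).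
  by rewrite -ex // dx big1.
have [_ ds] := dga_d_sum_hom hs (@gca_hom0 _ B) e.
have fs k : (k < N)%N -> f (s k) = 0.
  apply: gca_hom_sum_eq (fun k => gca_morph_hom fm (hs k)) (@gca_hom0 _ C) _ k.
  by rewrite -gca_morph_sum // -ex // fx big1.
rewrite (ex N) //; apply: exact_sum => k kN.
by apply: (qi k).1 (hs k) (esym (ds k kN)) _; rewrite fs //; apply: exact0.
Qed.

Section MasseyTails.
Variables (R : realType) (A : GCA R) (n p : nat) (q : nat -> nat).
Implicit Types (b xi : nat -> A).

Definition signed_xi xi j : A := (-1) ^+ (p + q j - 1) *: xi j.

Definition xi_tail xi k : A := \prod_(k <= j < n) xi j.

Definition massey_tail b xi k : A :=
  \sum_(k <= i < n) ((\prod_(k <= j < i) signed_xi xi j) * b i * xi_tail xi i.+1).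

Lemma massey_eltE b xi : massey_elt n p q b xi = massey_tail b xi 0.
Proof. by []. Qed.

Lemma xi_tail_ge xi k : (n <= k)%N -> xi_tail xi k = 1.
Proof. by move=> h; rewrite /xi_tail big_geq. Qed.

Lemma xi_tailS xi k : (k < n)%N -> xi_tail xi k = xi k * xi_tail xi k.+1.
Proof. by move=> h; rewrite /xi_tail big_ltn. Qed.

Lemma massey_tail_ge b xi k : (n <= k)%N -> massey_tail b xi k = 0.
Proof. by move=> h; rewrite /massey_tail big_geq. Qed.

Lemma massey_tailS b xi k : (k < n)%N ->
  massey_tail b xi k = b k * xi_tail xi k.+1 + signed_xi xi k * massey_tail b xi k.+1.
Proof.
move=> h; rewrite /massey_tail big_ltn // big_geq // mul1r; congr (_ + _).
rewrite big_distrr; apply: eq_big_nat => i /andP[ki _].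
by rewrite big_ltn //= -!mulrA.
Qed.

Lemma massey_tail_eq b1 b2 xi1 xi2 :
  (forall j, (j < n)%N -> b1 j = b2 j) -> (forall j, (j < n)%N -> xi1 j = xi2 j) ->
  forall k, (k <= n)%N ->
  xi_tail xi1 k = xi_tail xi2 k /\ massey_tail b1 xi1 k = massey_tail b2 xi2 k.
Proof.
move=> eb ex; apply: nat_down_ind; first by rewrite !xi_tail_ge // !massey_tail_ge.
move=> k kn [eS eM].
by rewrite !(xi_tailS _ kn) !(massey_tailS _ _ kn) eS eM /signed_xi eb // ex.
Qed.

Lemma massey_tail_xi0 b xi :
  (2 <= n)%N -> (forall j, (j < n)%N -> xi j = 0) -> massey_tail b xi 0 = 0.
Proof.
move=> n2 hx; have n0 : (0 < n)%N by apply: ltnW.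
rewrite massey_tailS // xi_tailS // /signed_xi hx // hx //.
by rewrite scaler0 !mul0r mulr0 addr0.
Qed.

(* Changing each [xi_j] by [al * b_j] does not change the representative:
   the extra terms cancel in pairs by graded commutativity, using
   [al * al = 0] for [al] of odd degree. *)
Lemma massey_tail_add_xi b xi (al : A) :
  ~~ odd p -> gca_hom_pred p al ->
  (forall i, (i < n)%N -> gca_hom (q i) (b i) /\ gca_hom (p + q i - 1) (xi i)) ->
  forall k, (k <= n)%N ->
  xi_tail (fun j => xi j + al * b j) k = xi_tail xi k + al * massey_tail b xi k /\
  massey_tail b (fun j => xi j + al * b j) k = massey_tail b xi k.
Proof.
move=> hp hal hv; have [p0|p_gt0] := posnP p.
  move: hal; rewrite p0 => -> k kn.
  have e j : (j < n)%N -> xi j + 0 * b j = xi j by rewrite mul0r addr0.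
  have [-> ->] := @massey_tail_eq b b _ xi (fun _ _ => erefl) e _ kn.
  by rewrite mul0r addr0.
have {}hal := gca_hom_pred_hom hal.
have odd_al : odd p.-1 by move: hp p_gt0; case: (p) => //= p' /negbNE.
have alal : al * al = 0 := gca_sqr_odd hal odd_al.
apply: nat_down_ind; first by rewrite !xi_tail_ge // !massey_tail_ge // mulr0 addr0.
move=> k kn [IS IM]; have [hb hx] := hv k kn.
rewrite !(xi_tailS _ kn) !(massey_tailS _ _ kn) IS IM.
have xi_al : xi k * al = (-1) ^+ (p + q k - 1) *: (al * xi k).
  by rewrite (gca_comm hx hal) sign_mul_odd.
have al_b_al : al * b k * al = 0.
  by rewrite -mulrA (gca_comm hb hal) -scalerAr mulrA alal mul0r scaler0.
have sgn_al_b : (-1) ^+ (p + q k - 1) *: (al * b k) = - (b k * al).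
  rewrite (gca_comm hal hb) mulnC sign_mul_odd // scalerA sign_even_add_pred //.
    by rewrite mulNr -expr2 sqrr_sign scaleN1r.
  exact: leq_trans p_gt0 (leq_addr _ _).
split.
  set M := massey_tail b xi k.+1.
  have e1 : xi k * (al * M) = al * (signed_xi xi k * M).
    by rewrite mulrA xi_al -scalerAl /signed_xi -scalerAl -scalerAr mulrA.
  have e2 : al * b k * (al * M) = 0 by rewrite mulrA al_b_al mul0r.
  rewrite mulrDl !mulrDr e1 e2 addr0 -!addrA; congr (_ + _).
  by rewrite addrC -mulrA.
rewrite /signed_xi scalerDr mulrDl mulrDr sgn_al_b mulNr mulrA.
by rewrite -addrA [X in _ + X]addrC -addrA addNr addr0.
Qed.

End MasseyTails.

Lemma gca_morph_massey_tail (R : realType) (B C : GCA R) (f : B -> C) n p q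
    (b xi : nat -> B) :
  gca_morph f -> forall k, (k <= n)%N ->
  f (xi_tail n xi k) = xi_tail n (fun j => f (xi j)) k /\
  f (massey_tail n p q b xi k) = massey_tail n p q (fun j => f (b j)) (fun j => f (xi j)) k.
Proof.
move=> fm; have [fD fZ f1 fM _] := fm.
apply: nat_down_ind; first by rewrite !xi_tail_ge // !massey_tail_ge // f1 gca_morph0.
move=> k kn [IS IM].
by rewrite !(xi_tailS _ kn) !(massey_tailS _ _ _ _ kn) fD !fM IS IM /signed_xi fZ.
Qed.

Lemma dga_morph_massey_exact (R : realType) (B C : DGA R) (f : B -> C) n p q
    (b xi : nat -> B) :
  dga_morph f -> exact (massey_tail n p q b xi 0) ->
  exact (massey_tail n p q (fun j => f (b j)) (fun j => f (xi j)) 0).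
Proof.
move=> [fm fd] [w dw]; have [_ <-] := gca_morph_massey_tail p q b xi fm (leq0n n).
by exists (f w); rewrite -fd dw.
Qed.

Section DefiningSystems.
Variables (R : realType) (A : DGA R) (n p : nat) (a : A) (q : nat -> nat).
Implicit Types (b xi be : nat -> A).

Definition defining_system b xi : Prop :=
  [/\ gca_hom p a, ~~ odd p, dga_d a = 0 &
   forall i, (i < n)%N -> [/\ gca_hom (q i) (b i), dga_d (b i) = 0,
      gca_hom (p + q i - 1) (xi i) & dga_d (xi i) = a * b i]].

Lemma massey_tail_closed b xi : defining_system b xi -> forall k, (k <= n)%N ->
  dga_d (xi_tail n xi k) = a * massey_tail n p q b xi k /\
  dga_d (massey_tail n p q b xi k) = 0.
Proof.
case=> ha hp da hv; apply: nat_down_ind.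
  by rewrite xi_tail_ge // massey_tail_ge // dga_d1 dga_d0 mulr0.
move=> k kn [dS dM]; have [hb db hx dx] := hv k kn.
rewrite xi_tailS // massey_tailS //; split.
  rewrite (dga_leibniz _ hx) dx dS mulrDr; congr (_ + _); first by rewrite mulrA.
  by rewrite /signed_xi -scalerAl !scalerAr !mulrA (gca_comm_even ha hp hx).
have hsx : gca_hom (p + q k - 1) (signed_xi p q xi k) by apply: gca_homZ.
rewrite dga_dD (dga_leibniz _ hb) db mul0r add0r dS.
rewrite (dga_leibniz _ hsx) dM mulr0 scaler0 addr0 /signed_xi dga_dZ dx.
rewrite -scalerAl mulrA -(gca_comm_even ha hp hb) -scalerDl.
have [pq0|pq_gt0] := posnP (p + q k)%N; last by rewrite sign_even_add_pred // addrN scale0r.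
(* if [p + q_k = 0], then [a * b_k = d xi_k] has degrees 0 and 1, so it vanishes *)
have hab1 : gca_hom 1 (a * b k) by rewrite -dx; apply: dga_d_hom; move: hx; rewrite pq0.
by rewrite (gca_hom_uniq (gca_homM ha hb) hab1) ?pq0 // mul0r scaler0.
Qed.

Lemma defining_system_add_db b xi be : defining_system b xi ->
  (forall i, (i < n)%N -> gca_hom_pred (q i) (be i)) ->
  defining_system (fun j => b j + dga_d (be j)) (fun j => xi j + a * be j).
Proof.
case=> ha hp da hv hbe; split => // i ni.
have [hb db hx dx] := hv i ni; have hbei := hbe i ni.
split.
- by apply: gca_homD => //; apply: dga_d_hom_pred.
- by rewrite dga_dD db dga_dd add0r.
- by apply: gca_homD => //; apply: gca_hom_predMr.
- by rewrite dga_dD dx (dga_leibniz _ ha) da mul0r add0r sign_even // scale1r mulrDr.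
Qed.

Lemma massey_tail_add_db_step qk (bk xk ek S S' M M' W : A) :
  gca_hom p a -> ~~ odd p -> gca_hom qk bk -> gca_hom (p + qk - 1) xk ->
  dga_d xk = a * bk -> gca_hom_pred qk ek ->
  S' = S + a * W -> M' = M + dga_d W -> dga_d S' = a * M' ->
  (xk + a * ek) * S' = xk * S + a * (ek * S' + xk * W) /\
  (bk + dga_d ek) * S' + (-1) ^+ (p + qk - 1) *: (xk + a * ek) * M' =
    bk * S + (-1) ^+ (p + qk - 1) *: xk * M + dga_d (ek * S' + xk * W).
Proof.
move=> ha hp hb hx dx hbe eS eM dS'; split.
  rewrite mulrDl {1}eS !mulrDr -!addrA; congr (_ + _).
  rewrite addrC mulrA; congr (_ + _); first by rewrite mulrA.
  by rewrite -(gca_comm_even ha hp hx) mulrA.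
have hbe' := gca_hom_pred_hom hbe.
rewrite dga_dD (dga_leibniz _ hbe') (dga_leibniz _ hx) dS' dx.
rewrite scalerDr !mulrDl {1}eS eM mulrDr.
have -> : bk * (a * W) = a * bk * W by rewrite mulrA (gca_comm_even ha hp hb).
have -> : (-1) ^+ qk.-1 *: (ek * (a * (M + dga_d W))) =
          (-1) ^+ (p + qk - 1) *: (a * ek) * (M + dga_d W).
  have [q0|q_gt0] := posnP qk.
    by move: hbe; rewrite q0 => ->; rewrite !(mul0r, mulr0, scaler0).
  rewrite -(sign_even_add_pred_r _ hp q_gt0) -scalerAl mulrA.
  by rewrite (gca_comm_even ha hp hbe').
rewrite -scalerAl mulrDr scalerDr scalerAl addrACA [X in X + _]addrACA -addrA.
by congr (_ + _); rewrite addrC.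
Qed.

Lemma massey_tail_add_db b xi be : defining_system b xi ->
  (forall i, (i < n)%N -> gca_hom_pred (q i) (be i)) ->
  forall k, (k <= n)%N -> exists W,
    xi_tail n (fun j => xi j + a * be j) k = xi_tail n xi k + a * W /\
    massey_tail n p q (fun j => b j + dga_d (be j)) (fun j => xi j + a * be j) k =
      massey_tail n p q b xi k + dga_d W.
Proof.
move=> hsys hbe; have dS' := massey_tail_closed (defining_system_add_db hsys hbe).
case: hsys => ha hp _ hv; apply: nat_down_ind.
  by exists 0; rewrite !xi_tail_ge // !massey_tail_ge // mulr0 dga_d0 !addr0.
move=> k kn [W [IS IM]]; have [hb _ hx dx] := hv k kn.
have [eS eM] := massey_tail_add_db_step ha hp hb hx dx (hbe k kn) IS IM (dS' k.+1 kn).1.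
exists (be k * xi_tail n (fun j => xi j + a * be j) k.+1 + xi k * W).
by rewrite !(xi_tailS _ kn) !(massey_tailS _ _ _ _ kn).
Qed.

(* The Massey set only depends on the cohomology classes of [a] and the
   [b_i]: a primitive system for representatives [a + d al], [b_i + d be_i]
   is turned into one for [a], [b_i] by subtracting [al * b'_i] and
   [a * be_i], which changes the representative by an exact element. *)
Lemma massey_exact_cohomologous (a' al : A) b b' be x :
  gca_hom p a -> ~~ odd p -> dga_d a = 0 -> gca_hom_pred p al -> a' = a + dga_d al ->
  (forall i, (i < n)%N -> [/\ gca_hom (q i) (b i), dga_d (b i) = 0,
     gca_hom_pred (q i) (be i), b' i = b i + dga_d (be i) &
     gca_hom (p + q i - 1) (x i) /\ dga_d (x i) = a' * b' i]) ->
  exact (massey_tail n p q b' x 0) ->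
  exists xi, (forall i, (i < n)%N ->
    gca_hom (p + q i - 1) (xi i) /\ dga_d (xi i) = a * b i) /\
    exact (massey_elt n p q b xi).
Proof.
move=> ha hp da hal ea' hv ex.
pose x2 j := x j - al * b' j; pose xi j := x2 j - a * be j.
have hbe i : (i < n)%N -> gca_hom_pred (q i) (be i) by case/hv.
have hb' i : (i < n)%N -> gca_hom (q i) (b' i) /\ dga_d (b' i) = 0.
  move=> ni; have [hb db hbei -> _] := hv i ni.
  by rewrite dga_dD db dga_dd addr0; split => //; apply: gca_homD (dga_d_hom_pred hbei).
have hx2 i : (i < n)%N -> gca_hom (q i) (b' i) /\ gca_hom (p + q i - 1) (x2 i).
  move=> ni; have [hb'i _] := hb' i ni; have [_ _ _ _ [hx _]] := hv i ni.
  by split => //; apply: gca_homB (gca_hom_predMl hal hb'i).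
have hsys : defining_system b xi.
  split => // i ni; have [hb db hbei eb' [_ dx]] := hv i ni.
  have [[_ hx2i] [_ db']] := (hx2 i ni, hb' i ni).
  split => //; first exact: gca_homB hx2i (gca_hom_predMr ha hbei).
  rewrite !dga_dB dx (dga_leibniz _ (gca_hom_pred_hom hal)) (dga_leibniz _ ha) db' da.
  rewrite mulr0 scaler0 addr0 mul0r add0r sign_even // scale1r.
  by rewrite ea' mulrDl addrK eb' mulrDr addrK.
have ex2 : exact (massey_tail n p q b' x2 0).
  have [_ <-] := massey_tail_add_xi hp hal hx2 (leq0n n).
  have [_ <-] := @massey_tail_eq _ _ n p q b' b' x (fun j => x2 j + al * b' j)
    (fun _ _ => erefl) (fun j _ => esym (subrK _ _)) 0 (leq0n n).
  exact: ex.
have [W [_ eW]] := massey_tail_add_db hsys hbe (leq0n n).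
have eb' j : (j < n)%N -> b j + dga_d (be j) = b' j by case/hv => _ _ _ ->.
have [_ eM] := massey_tail_eq p q eb' (fun j _ => subrK (a * be j) (x2 j)) (leq0n n).
exists xi; split; first by move=> i ni; case: hsys => _ _ _ /(_ i ni) [].
rewrite massey_eltE -[massey_tail _ _ _ _ _ 0](addrK (dga_d W)) -eW eM.
by apply: exactB ex2 _; exists W.
Qed.

End DefiningSystems.

Section QuasiIsomorphisms.
Variable R : realType.

Lemma quasi_iso_lift (M A : DGA R) (f : M -> A) : gca_morph f -> quasi_iso f ->
  forall k (y : A), gca_hom k y -> dga_d y = 0 ->
  exists x e, [/\ gca_hom k x, dga_d x = 0, gca_hom_pred k e & f x = y + dga_d e].
Proof.
move=> fm fqi k y hy dy; have [x [hx dx ex]] := (fqi k).2 y hy dy.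
have [e [he de]] := exact_hom_pred (gca_homB (gca_morph_hom fm hx) hy) ex.
by exists x, e; split => //; rewrite de addrC subrK.
Qed.

Lemma quasi_iso_lift_family (M A : DGA R) (f : M -> A) n q (b : nat -> A) :
  gca_morph f -> quasi_iso f ->
  (forall i, (i < n)%N -> gca_hom (q i) (b i) /\ dga_d (b i) = 0) ->
  exists (bM : nat -> M) (be : nat -> A), forall i, (i < n)%N ->
    [/\ gca_hom (q i) (bM i), dga_d (bM i) = 0, gca_hom_pred (q i) (be i) &
        f (bM i) = b i + dga_d (be i)].
Proof.
move=> fm fqi hb.
have hex i : (i < n)%N -> exists c : M * A, [/\ gca_hom (q i) c.1, dga_d c.1 = 0,
    gca_hom_pred (q i) c.2 & f c.1 = b i + dga_d c.2].
  by move=> /hb [hbi dbi]; have [x [e he]] := quasi_iso_lift fm fqi hbi dbi; exists (x, e).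
have [c hc] := choice_ltn (0 : M, 0 : A) hex.
by exists (fun i => (c i).1), (fun i => (c i).2).
Qed.

(* Into a DGA with zero differential, exact elements have primitives in the
   kernel: correct any primitive by a cocycle with the same image. *)
Lemma quasi_iso_primitive_in_ker (M C : DGA R) (g : M -> C) :
  gca_morph g -> quasi_iso g -> (forall z : C, dga_d z = 0) ->
  forall m (y : M), gca_hom m y -> exact y ->
  exists x, [/\ gca_hom (m - 1) x, dga_d x = y & g x = 0].
Proof.
move=> gm gqi dC m y hy ey; have [eta [heta deta]] := exact_hom_pred hy ey.
have {}heta := gca_hom_pred_hom heta.
have [z [hz dz [w dw]]] := (gqi m.-1).2 (g eta) (gca_morph_hom gm heta) (dC _).
exists (eta - z); rewrite subn1 dga_dB deta dz subr0 gca_morphB //.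
by split => //; [apply: gca_homB | rewrite -opprB -dw dC oppr0].
Qed.

(* For [n >= 2] every term of the representative contains some [xi_j]. *)
Lemma quasi_iso_massey_exact (M C : DGA R) (g : M -> C) n p (a : M) q
    (b xi : nat -> M) :
  gca_morph g -> quasi_iso g -> (2 <= n)%N -> defining_system n p a q b xi ->
  (forall i, (i < n)%N -> g (xi i) = 0) -> exact (massey_tail n p q b xi 0).
Proof.
move=> gm gqi n2 hsys gxi.
apply: (quasi_iso_ker_exact gm gqi); first exact: (massey_tail_closed hsys (leq0n n)).2.
have [_ ->] := gca_morph_massey_tail p q b xi gm (leq0n n).
exact: massey_tail_xi0.
Qed.

End QuasiIsomorphisms.

Unset Implicit Arguments.

Theorem theorem2p10 (R : realType) (A : DGA R) :
  connected A ->
  (exists (n p : nat) (a : A) (q : nat -> nat) (b : nat -> A),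
      (2 <= n)%N /\ massey_nontrivial n p a q b) ->
  ~ formal A.
Proof.
move=> _ [n [p [a [q [b [n2 [ha hp da hb nontriv]]]]]]].
move=> [M [C [f [g [_ [_ [[fm fd] fqi] [dC _ _ _ _] [[gm _] gqi]]]]]]].
have fM : forall x y, f (x * y) = f x * f y by case: fm.
have [aM [al [haM daM hal fa]]] := quasi_iso_lift fm fqi ha da.
have hb_cocycle i : (i < n)%N -> gca_hom (q i) (b i) /\ dga_d (b i) = 0 by case/hb.
have [bM [be hbM]] := quasi_iso_lift_family fm fqi hb_cocycle.
have hxM i : (i < n)%N -> exists x,
    [/\ gca_hom (p + q i - 1) x, dga_d x = aM * bM i & g x = 0].
  move=> ni; have [hbMi dbMi _ fbi] := hbM i ni; have [_ dbi eabi] := hb i ni.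
  apply: (quasi_iso_primitive_in_ker gm gqi dC (gca_homM haM hbMi)).
  apply: (fqi _).1 (gca_homM haM hbMi) (dga_closedM haM daM dbMi) _.
  by rewrite fM fa fbi; apply: exact_mul_cohomologous ha da dbi (gca_hom_pred_hom hal) eabi.
have [xM {}hxM] := choice_ltn 0 hxM.
have hsysM : defining_system n p aM q bM xM.
  by split => // i ni; have [? ? _ _] := hbM i ni; have [? ? _] := hxM i ni.
have gxM i : (i < n)%N -> g (xM i) = 0 by case/hxM.
have eM := quasi_iso_massey_exact gm gqi n2 hsysM gxM.
have hA i : (i < n)%N -> [/\ gca_hom (q i) (b i), dga_d (b i) = 0,
    gca_hom_pred (q i) (be i), f (bM i) = b i + dga_d (be i) &
    gca_hom (p + q i - 1) (f (xM i)) /\ dga_d (f (xM i)) = f aM * f (bM i)].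
  move=> ni; have [_ _ ? ?] := hbM i ni; have [hx dx _] := hxM i ni; have [? ? _] := hb i ni.
  by split => //; split; [exact: gca_morph_hom | rewrite -fd dx fM].
have [xi [hxi exi]] :=
  massey_exact_cohomologous ha hp da hal fa hA (dga_morph_massey_exact (conj fm fd) eM).
exact: nontriv hxi exi.
Qed.
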